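(* Let $(g_\alpha)_{\alpha<\omega_1}\subset\mathcal{I}$. Then there exists $(f_\alpha)_{\alpha<\omega_1}\subset\mathcal{I}$ such that (1) $f_\alpha(n)\le g_\alpha(n)$ for all $\alpha<\omega_1$ and $n\in\mathbb{N}$, and (2) $j(f_\beta)\subset^a j(f_\alpha)$ for all $\alpha<\beta<\omega_1$.
   Context: $\mathcal{I}$ is the class of all non-decreasing maps $f:\mathbb{N}\to\mathbb{N}\cup\{0\}$ with $f(1)=0$, $\lim_{n\to\infty}f(n)=\infty$, and $f(n+1)\le f(n)+1$ for all $n$. The map $j:\mathcal{I}\to[\mathbb{N}]^\omega$ (infinite subsets of $\mathbb{N}$) is $j(f)=\{n\in\mathbb{N}:f(n+1)>f(n)\}$. For infinite $A,B\subset\mathbb{N}$, $A\subset^a B$ means $A\setminus B$ is finite. *)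

(* Natural numbers ℕ = {1,2,...} are represented by Rocq's nat
   restricted to n >= 1; values of functions at 0 are irrelevant. *)
From Stdlib Require Import Arith.

Definition in_I (f : nat -> nat) : Prop :=
  f 1 = 0 /\
  (forall n, 1 <= n -> f n <= f (S n)) /\
  (forall n, 1 <= n -> f (S n) <= f n + 1) /\
  (forall m, exists N, 1 <= N /\ forall n, N <= n -> m <= f n).

Definition j (f : nat -> nat) : nat -> Prop :=
  fun n => 1 <= n /\ f n < f (S n).

Definition almost_subset (A B : nat -> Prop) : Prop :=
  exists N, forall n, N <= n -> A n -> B n.

(* (W, lt) is (order-isomorphic to) ω₁: an uncountable well-order all of
   whose proper initial segments are countable. *)
Definition is_omega1 (W : Type) (lt : W -> W -> Prop) : Prop :=
  (forall x, ~ lt x x) /\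
  (forall x y z, lt x y -> lt y z -> lt x z) /\
  (forall x y, lt x y \/ x = y \/ lt y x) /\
  well_founded lt /\
  (~ exists h : W -> nat, forall x y, h x = h y -> x = y) /\
  (forall b : W, exists h : W -> nat,
      forall x y, lt x b -> lt y b -> h x = h y -> x = y).

(* Every f ∈ I is the counting function of its jump set: f(n) = #(j(f) ∩ [1,n)).
   Conversely, for an infinite X ⊆ ℕ the counting function
   [count_upto X] lies in I and has jump set X.  Since f ≤ g means that X is
   "g-sparse" (#(X ∩ [1,n)) ≤ g(n)), the lemma reduces to building, by
   transfinite recursion along ω₁, infinite sets A_α that are g_α-sparse and
   satisfy A_β ⊂^a A_α for α < β, and then taking f_α := count_upto A_α. *)

From Stdlib Require Import Arith Lia Classical ClassicalEpsilon FunctionalExtensionality.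

Definition infinite_set (X : nat -> Prop) : Prop :=
  forall N, exists n, N <= n /\ X n.

Fixpoint count_upto (X : nat -> Prop) (n : nat) : nat :=
  match n with
  | 0 => 0
  | S m => count_upto X m
           + (if excluded_middle_informative (1 <= m /\ X m) then 1 else 0)
  end.

Definition sparse (G : nat -> nat) (X : nat -> Prop) : Prop :=
  forall n, 1 <= n -> count_upto X n <= G n.

Lemma count_upto_in X n : 1 <= n -> X n -> count_upto X (S n) = count_upto X n + 1.
Proof. intros. simpl. destruct (excluded_middle_informative _); tauto. Qed.

Lemma count_upto_notin X n :
  ~ (1 <= n /\ X n) -> count_upto X (S n) = count_upto X n.
Proof. intros. simpl. destruct (excluded_middle_informative _); [tauto | lia]. Qed.

Lemma count_upto_step X n :
  count_upto X n <= count_upto X (S n) <= count_upto X n + 1.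
Proof. simpl. destruct (excluded_middle_informative _); lia. Qed.

Lemma count_upto_mono X n m : n <= m -> count_upto X n <= count_upto X m.
Proof. induction 1; [lia |]. pose proof (count_upto_step X m). lia. Qed.

Lemma j_count_upto X n : j (count_upto X) n <-> 1 <= n /\ X n.
Proof.
  unfold j; split.
  - intros [Hn Hjump]. split; [exact Hn |].
    apply NNPP; intro HX. rewrite count_upto_notin in Hjump; [lia | tauto].
  - intros [Hn HX]. split; [exact Hn |]. rewrite count_upto_in; auto. lia.
Qed.

Lemma count_upto_in_I X : infinite_set X -> in_I (count_upto X).
Proof.
  intro Hinf. split; [| split; [| split]].
  - simpl. destruct (excluded_middle_informative _); lia.
  - intros n _. pose proof (count_upto_step X n). lia.
  - intros n _. pose proof (count_upto_step X n). lia.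
  - induction m as [| m [N [HN Hbound]]].
    + exists 1. split; lia.
    + destruct (Hinf (S N)) as [p [Hp HXp]].
      exists (S p). split; [lia |]. intros n Hn.
      pose proof (count_upto_mono X _ _ Hn) as Hmono.
      rewrite count_upto_in in Hmono by (auto; lia).
      specialize (Hbound p ltac:(lia)). lia.
Qed.

Lemma in_I_mono G : in_I G -> forall n m, 1 <= n -> n <= m -> G n <= G m.
Proof.
  intros [_ [Hmono _]] n m Hn Hnm. induction Hnm; [lia |].
  specialize (Hmono m ltac:(lia)). lia.
Qed.

Lemma strict_incr_lt (b : nat -> nat) :
  (forall k, b k < b (S k)) -> forall k m, k < m <-> b k < b m.
Proof.
  intros Hb.
  assert (Hlt : forall k m, k < m -> b k < b m).
  { intros k m H. induction H; [apply Hb | specialize (Hb m); lia]. }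
  intros k m. split; [apply Hlt |].
  intro H. destruct (Nat.lt_ge_cases k m) as [| Hmk]; [assumption |].
  destruct (Nat.eq_dec k m) as [-> | Hne]; [lia |].
  specialize (Hlt m k ltac:(lia)). lia.
Qed.

Lemma range_sparse G (HG : in_I G) (b : nat -> nat)
  (Hincr : forall k, b k < b (S k)) (Hgrowth : forall k, S k <= G (S (b k))) :
  sparse G (fun n => exists k, b k = n).
Proof.
  set (B := fun n => exists k, b k = n).
  (* Below n, the points of B counted are among b 0, ..., b k for a b k < n. *)
  assert (Hcount : forall n, count_upto B n = 0 \/
                             exists k, b k < n /\ count_upto B n <= S k).
  { induction n as [| n IH]; [now left |].
    destruct (classic (1 <= n /\ B n)) as [Hin | Hout].
    - rewrite count_upto_in by tauto. destruct Hin as [_ [m Hm]].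
      right. exists m. split; [lia |].
      destruct IH as [Hzero | [k [Hk Hle]]]; [lia |].
      assert (k < m) by (apply (strict_incr_lt b Hincr); lia). lia.
    - rewrite count_upto_notin by assumption.
      destruct IH as [Hzero | [k [Hk Hle]]]; [now left | right; exists k; lia]. }
  intros n Hn. destruct (Hcount n) as [Hzero | [k [Hk Hle]]]; [lia |].
  pose proof (Hgrowth k).
  pose proof (in_I_mono G HG (S (b k)) n ltac:(lia) ltac:(lia)). lia.
Qed.

Lemma almost_subset_refl X : almost_subset X X.
Proof. exists 0. auto. Qed.

Lemma almost_subset_trans X Y Z :
  almost_subset X Y -> almost_subset Y Z -> almost_subset X Z.
Proof.
  intros [N1 H1] [N2 H2]. exists (N1 + N2). intros n Hn HX.
  apply H2; [lia |]. apply H1; [lia | exact HX].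
Qed.

Lemma almost_subset_weaken X Y Z :
  almost_subset X Y -> (forall n, Y n -> Z n) -> almost_subset X Z.
Proof. intros [N H] HYZ. exists N. auto. Qed.

Lemma almost_subset_inter D P Q : almost_subset D P -> almost_subset D Q ->
  almost_subset D (fun n => P n /\ Q n).
Proof.
  intros [N1 H1] [N2 H2]. exists (N1 + N2). intros n Hn HD.
  split; [apply H1 | apply H2]; auto; lia.
Qed.

Lemma infinite_almost_subset D Y :
  infinite_set D -> almost_subset D Y -> infinite_set Y.
Proof.
  intros HD [N HN] M. destruct (HD (N + M)) as [n [Hn HDn]].
  exists n. split; [lia |]. apply HN; [lia | exact HDn].
Qed.

(* Its k-th point is taken in C k, beyond the
   previous point and beyond the place where G reaches k + 1. *)
Lemma sparse_pseudo_intersection (C : nat -> nat -> Prop)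
  (Cdecr : forall k n, C (S k) n -> C k n) (Cinf : forall k, infinite_set (C k))
  (G : nat -> nat) (HG : in_I G) :
  exists B, infinite_set B /\ sparse G B /\ forall k, almost_subset B (C k).
Proof.
  assert (Cdecr' : forall k m n, k <= m -> C m n -> C k n)
    by (intros k m n Hkm; induction Hkm; auto).
  assert (Hpick : forall k p, exists n, p < n /\ C k n /\ S k <= G (S n)).
  { intros k p. destruct HG as [_ [_ [_ Hunbounded]]].
    destruct (Hunbounded (S k)) as [N [_ HN]].
    destruct (Cinf k (N + S p)) as [n [Hn HCn]].
    exists n. repeat split; [lia | exact HCn | apply HN; lia]. }
  assert (Hsel : exists sel : nat -> nat -> nat, forall k p,
             p < sel k p /\ C k (sel k p) /\ S k <= G (S (sel k p))).
  { apply (choice (fun k s => forall p, p < s p /\ C k (s p) /\ S k <= G (S (s p)))).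
    intro k. exact (choice (fun p n => p < n /\ C k n /\ S k <= G (S n)) (Hpick k)). }
  destruct Hsel as [sel Hsel].
  set (b := nat_rect (fun _ => nat) (sel 0 0) (fun k bk => sel (S k) bk)).
  assert (Hincr : forall k, b k < b (S k)) by (intro k; apply (Hsel (S k))).
  assert (Hb : forall k, C k (b k) /\ S k <= G (S (b k)))
    by (intros [| k]; apply Hsel).
  assert (Hlarge : forall k, k <= b k)
    by (induction k; [lia | specialize (Hincr k); lia]).
  exists (fun n => exists k, b k = n). split; [| split].
  - intro N. exists (b N). eauto.
  - apply range_sparse; [exact HG | exact Hincr | apply Hb].
  - intro k. exists (b k). intros n Hn [m <-].
    assert (k <= m).
    { destruct (Nat.le_gt_cases k m) as [| Hmk]; [assumption |].
      apply (strict_incr_lt b Hincr) in Hmk. lia. }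
    apply (Cdecr' k m); [assumption | apply Hb].
Qed.

Section CountableChain.

Variables (W : Type) (lt : W -> W -> Prop).
Hypothesis lt_total : forall x y, lt x y \/ x = y \/ lt y x.
Variables (a : W) (h : W -> nat).
Hypothesis h_inj : forall x y, lt x a -> lt y a -> h x = h y -> x = y.
Variable A : W -> nat -> Prop.
Hypothesis A_inf : forall b, lt b a -> infinite_set (A b).
Hypothesis A_chain :
  forall b c, lt b a -> lt c a -> lt b c -> almost_subset (A c) (A b).

Definition chain_inter (k : nat) : nat -> Prop :=
  fun n => forall x, lt x a -> h x < k -> A x n.

(* Each chain_inter k almost contains an infinite set D which is comparable
   with every member of the chain (D is either ℕ or some A x). *)
Lemma chain_inter_witness k : exists D, infinite_set D /\
  almost_subset D (chain_inter k) /\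
  forall b, lt b a -> almost_subset D (A b) \/ almost_subset (A b) D.
Proof.
  induction k as [| k [D [HDinf [HDsub HDcmp]]]].
  - exists (fun _ => True). split; [| split].
    + intro N. exists N. auto.
    + exists 0. intros n _ _ x _ Hx. lia.
    + intros b _. right. exists 0. auto.
  - destruct (classic (exists x, lt x a /\ h x = k)) as [[x [Hxa Hhx]] | Hnone].
    +
      assert (Hstep : forall n, chain_inter k n /\ A x n -> chain_inter (S k) n).
      { intros n [HC HA] y Hya Hy. destruct (Nat.eq_dec (h y) k) as [Hyk | Hyk].
        - rewrite (h_inj y x Hya Hxa ltac:(lia)). exact HA.
        - apply HC; [exact Hya | lia]. }
      destruct (HDcmp x Hxa) as [HDx | HxD].
      * exists D. split; [exact HDinf | split; [| exact HDcmp]].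
        eapply almost_subset_weaken;
          [apply almost_subset_inter; [exact HDsub | exact HDx] | exact Hstep].
      * exists (A x). split; [auto | split].
        -- eapply almost_subset_weaken; [apply almost_subset_inter | exact Hstep].
           ++ exact (almost_subset_trans _ _ _ HxD HDsub).
           ++ apply almost_subset_refl.
        -- intros b Hb. destruct (lt_total b x) as [Hbx | [<- | Hxb]].
           ++ left. auto.
           ++ left. apply almost_subset_refl.
           ++ right. auto.
    +
      exists D. split; [exact HDinf | split; [| exact HDcmp]].
      eapply almost_subset_weaken; [exact HDsub |].
      intros n HC y Hya Hy. apply HC; [exact Hya |].
      destruct (Nat.eq_dec (h y) k); [exfalso; eauto | lia].
Qed.

Lemma chain_sparse_pseudo_intersection (G : nat -> nat) (HG : in_I G) :
  exists B, infinite_set B /\ sparse G B /\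
    forall b, lt b a -> almost_subset B (A b).
Proof.
  destruct (sparse_pseudo_intersection chain_inter) with (G := G)
    as [B [HBinf [HBsparse HBsub]]]; [| | exact HG |].
  - intros k n HC x Hx Hhx. apply HC; [exact Hx | lia].
  - intro k. destruct (chain_inter_witness k) as [D [HD [HDsub _]]].
    exact (infinite_almost_subset D _ HD HDsub).
  - exists B. split; [exact HBinf | split; [exact HBsparse |]].
    intros b Hb. eapply almost_subset_weaken; [exact (HBsub (S (h b))) |].
    intros n HC. apply HC; [exact Hb | lia].
Qed.

End CountableChain.

Lemma coherent_family_by_recursion (W T : Type) (lt : W -> W -> Prop)
  (lt_wf : well_founded lt) (t0 : T) (R : W -> T -> Prop) (Q : T -> T -> Prop)
  (extend : forall a (F : W -> T),
      (forall b, lt b a -> R b (F b)) ->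
      (forall b c, lt b a -> lt c a -> lt b c -> Q (F c) (F b)) ->
      exists t, R a t /\ forall b, lt b a -> Q t (F b)) :
  exists F : W -> T, forall a, R a (F a) /\ forall b, lt b a -> Q (F a) (F b).
Proof.
  set (Good := fun a (rec : forall b, lt b a -> T) t =>
                 R a t /\ forall b (Hb : lt b a), Q t (rec b Hb)).
  set (step := fun a rec => epsilon (inhabits t0) (Good a rec)).
  set (F := Fix lt_wf (fun _ => T) step).
  exists F. intro a. induction a as [a IH] using (well_founded_ind lt_wf).
  assert (Hunfold : F a = step a (fun b _ => F b)).
  { apply (Fix_eq lt_wf (fun _ => T) step).
    intros x rec1 rec2 Hrec.
    replace rec2 with rec1; [reflexivity |].
    extensionality y. extensionality Hy. apply Hrec. }
  rewrite Hunfold. apply (epsilon_spec (inhabits t0) (Good a (fun b _ => F b))).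
  apply (extend a F).
  - intros b Hb. apply IH, Hb.
  - intros b c _ Hc Hbc. apply IH; assumption.
Qed.

Theorem lemma3p5 (W : Type) (lt : W -> W -> Prop) (HW : is_omega1 W lt)
  (g : W -> nat -> nat) (Hg : forall a, in_I (g a)) :
  exists f : W -> nat -> nat,
    (forall a, in_I (f a)) /\
    (forall a n, 1 <= n -> f a n <= g a n) /\
    (forall a b, lt a b -> almost_subset (j (f b)) (j (f a))).
Proof.
  destruct HW as [_ [_ [lt_total [lt_wf [_ Hsegment_countable]]]]].
  destruct (coherent_family_by_recursion W (nat -> Prop) lt lt_wf (fun _ => True)
              (fun a B => infinite_set B /\ sparse (g a) B) almost_subset)
    as [A HA].
  { intros a F HR HQ. destruct (Hsegment_countable a) as [h h_inj].
    destruct (chain_sparse_pseudo_intersection W lt lt_total a h h_inj F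
                (fun b Hb => proj1 (HR b Hb)) HQ (g a) (Hg a))
      as [B [HBinf [HBsparse HBsub]]].
    exists B. auto. }
  exists (fun a => count_upto (A a)). split; [| split].
  - intro a. apply count_upto_in_I, HA.
  - intros a n Hn. apply HA, Hn.
  - intros a b Hab. destruct (proj2 (HA b) a Hab) as [N HN].
    exists N. intros n Hn Hj. apply j_count_upto in Hj. apply j_count_upto.
    split; [tauto | apply HN; tauto].
Qed.
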